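(* Let $(Q,\cdot)$ be a quasigroup and consider its six parastrophic operations $\cdot,\circ_1,\circ_2,\circ_3,\circ_4,\circ_5$. Then $(Q,\cdot)$ is medial if and only if any pair of its parastrophic binary operations satisfies the interchange law; more precisely, if $(Q,\cdot)$ is medial then for every (not necessarily distinct) pair $\ast,\star$ of these six operations, $(x\ast y)\star(z\ast w)=(x\star z)\ast(y\star w)$ for all $x,y,z,w\in Q$, and conversely if this holds for some such pair $\ast,\star$ then $(Q,\cdot)$ is medial.
   Context: A quasigroup is a magma $(Q,\cdot)$ in which for all $a,b$ the equations $ax=b$, $ya=b$ have unique solutions. It is medial if $(xy)(zw)=(xz)(yw)$ for all $x,y,z,w$. The parastrophes of $(Q,\cdot)$ are the operations defined by: $x\circ_1 y=z\iff xz=y$; $x\circ_2 y=z\iff zy=x$; $x\circ_3 y=z\iff zx=y$; $x\circ_4 y=z\iff yz=x$; $x\circ_5 y=z\iff yx=z$. *)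

Set Implicit Arguments.

Definition quasigroup (Q : Type) (mul : Q -> Q -> Q) : Prop :=
  (forall a b : Q, exists! x : Q, mul a x = b) /\
  (forall a b : Q, exists! y : Q, mul y a = b).

Definition medial (Q : Type) (mul : Q -> Q -> Q) : Prop :=
  forall x y z w : Q, mul (mul x y) (mul z w) = mul (mul x z) (mul y w).

(* The six parastrophes: P0 is the operation itself, P1..P5 are o_1..o_5. *)
Inductive para : Type := P0 | P1 | P2 | P3 | P4 | P5.

Definition is_parastrophe (Q : Type) (mul : Q -> Q -> Q) (p : para)
  (op : Q -> Q -> Q) : Prop :=
  forall x y z : Q,
    op x y = z <->
    match p with
    | P0 => mul x y = z
    | P1 => mul x z = y
    | P2 => mul z y = x
    | P3 => mul z x = y
    | P4 => mul y z = x
    | P5 => mul y x = z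
    end.

Definition interchange (Q : Type) (star ast : Q -> Q -> Q) : Prop :=
  forall x y z w : Q,
    ast (star x y) (star z w) = star (ast x z) (ast y w).

From Stdlib Require Import Setoid.
Set Implicit Arguments.

(* An operation [f] satisfies the interchange law with [g] exactly when [f],
   applied coordinatewise, maps the graph of [g] (a ternary relation) into
   itself, and this closure condition is symmetric in [f] and [g]. The graph
   of a parastrophe is the graph of [mul] with its coordinates permuted, and
   coordinatewise closure is blind to such permutations. Hence every
   interchange law between two parastrophes is equivalent to closure of the
   graph of [mul] under [mul], i.e. to mediality. *)

Section Parastrophes.

Variable Q : Type.

Definition graph (g : Q -> Q -> Q) (x y z : Q) : Prop := g x y = z.

Definition preserves (f : Q -> Q -> Q) (R : Q -> Q -> Q -> Prop) : Prop :=
  forall x y z x' y' z',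
    R x y z -> R x' y' z' -> R (f x x') (f y y') (f z z').

Definition parastrophe_rel (p : para) (R : Q -> Q -> Q -> Prop) (x y z : Q)
  : Prop :=
  match p with
  | P0 => R x y z
  | P1 => R x z y
  | P2 => R z y x
  | P3 => R z x y
  | P4 => R y z x
  | P5 => R y x z
  end.

Lemma preserves_ext (f : Q -> Q -> Q) {R S : Q -> Q -> Q -> Prop} :
  (forall x y z, R x y z <-> S x y z) -> preserves f R <-> preserves f S.
Proof.
  intros RS; split; intros H x y z x' y' z' r r'; apply RS;
    apply H; apply RS; assumption.
Qed.

Lemma preserves_parastrophe_rel (f : Q -> Q -> Q) (p : para)
  (R : Q -> Q -> Q -> Prop) :
  preserves f (parastrophe_rel p R) <-> preserves f R.
Proof.
  destruct p; split; intros H x y z x' y' z' r r'; exact (H _ _ _ _ _ _ r r').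
Qed.

Lemma interchange_preserves_graph (f g : Q -> Q -> Q) :
  interchange g f <-> preserves f (graph g).
Proof.
  unfold interchange, preserves, graph; split.
  - intros H x y z x' y' z' <- <-; symmetry; apply H.
  - intros H x y z w; symmetry; apply H; reflexivity.
Qed.

Lemma preserves_graph_sym (f g : Q -> Q -> Q) :
  preserves f (graph g) <-> preserves g (graph f).
Proof.
  rewrite <- !interchange_preserves_graph; unfold interchange.
  split; intros H x y z w; symmetry; apply H.
Qed.

Lemma medial_preserves_graph (mul : Q -> Q -> Q) :
  medial mul <-> preserves mul (graph mul).
Proof. rewrite <- interchange_preserves_graph; reflexivity. Qed.

Lemma graph_parastrophe (mul op : Q -> Q -> Q) (p : para) :
  is_parastrophe mul p op ->
  forall x y z, graph op x y z <-> parastrophe_rel p (graph mul) x y z.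
Proof. destruct p; exact id. Qed.

Lemma preserves_graph_parastrophe {f mul op : Q -> Q -> Q} {p : para} :
  is_parastrophe mul p op -> preserves f (graph op) <-> preserves f (graph mul).
Proof.
  intros hop; rewrite (preserves_ext f (graph_parastrophe hop)).
  apply preserves_parastrophe_rel.
Qed.

Lemma interchange_parastrophe_medial (mul op1 op2 : Q -> Q -> Q) (p1 p2 : para) :
  is_parastrophe mul p1 op1 -> is_parastrophe mul p2 op2 ->
  interchange op1 op2 <-> medial mul.
Proof.
  intros hop1 hop2.
  rewrite interchange_preserves_graph, (preserves_graph_parastrophe hop1).
  rewrite preserves_graph_sym, (preserves_graph_parastrophe hop2).
  symmetry; apply medial_preserves_graph.
Qed.

End Parastrophes.

Theorem theorem7p1 (Q : Type) (mul : Q -> Q -> Q) (hq : quasigroup mul)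
  (ops : para -> Q -> Q -> Q)
  (hops : forall p : para, is_parastrophe mul p (ops p)) :
  (medial mul -> forall a b : para, interchange (ops a) (ops b)) /\
  (forall a b : para, interchange (ops a) (ops b) -> medial mul).
Proof.
  split.
  - intros hm a b; apply (interchange_parastrophe_medial (hops a) (hops b)), hm.
  - intros a b; apply (interchange_parastrophe_medial (hops a) (hops b)).
Qed.
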